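(* Let $r\ge 3$ and let $\mathcal H=(V,E)$ be an $r$-uniform bi-hypergraph such that $d(v)\le \frac{(r-1)^{r-1}\mathrm{e}^{-1}-2}{r}$ for every $v\in V$, where $\mathrm{e}$ is the base of the natural logarithm. Then $\mathcal H$ is colorable.
   Context: A bi-hypergraph $\mathcal H=(V,E)$ consists of a finite vertex set $V$ and a set $E$ of subsets of $V$, called edges, with no edge contained in another. It is $r$-uniform if every edge has exactly $r$ elements. The degree $d(v)$ of a vertex $v$ is the number of edges containing $v$. A mapping $f:V\to\mathbb N$ is a proper coloring of $\mathcal H$ if $1<|f(e)|<|e|$ for every $e\in E$, where $f(e)=\{f(v):v\in e\}$. $\mathcal H$ is colorable if it has a proper coloring. *)

From mathcomp Require Import all_boot.
From Stdlib Require Import Reals.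
Set Implicit Arguments. Unset Strict Implicit. Unset Printing Implicit Defensive.

Definition bihypergraph (V : finType) (E : {set {set V}}) : Prop :=
  forall e1 e2, e1 \in E -> e2 \in E -> e1 \subset e2 -> e1 = e2.

Definition uniform (V : finType) (E : {set {set V}}) (r : nat) : Prop :=
  forall e, e \in E -> #|e| = r.

Definition degree (V : finType) (E : {set {set V}}) (v : V) : nat :=
  #|[set e in E | v \in e]|.

Definition ncolors (V : finType) (f : V -> nat) (e : {set V}) : nat :=
  size (undup [seq f x | x <- enum e]).

Definition proper_coloring (V : finType) (E : {set {set V}}) (f : V -> nat) : Prop :=
  forall e, e \in E -> 1 < ncolors f e < #|e|.

Definition colorable (V : finType) (E : {set {set V}}) : Prop :=
  exists f : V -> nat, proper_coloring E f.

From mathcomp Require Import all_boot zify.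
From Stdlib Require Import Reals Lra.
Set Implicit Arguments. Unset Strict Implicit. Unset Printing Implicit Defensive.
Local Notation "m ^ n" := (expn m n) : nat_scope.

(* Colour with k = r - 1 colours: an r-edge can then never be rainbow, so a
   colouring is proper as soon as no edge is monochromatic.  A uniformly random
   colouring makes a fixed edge monochromatic with probability p = k^(-k), and this
   event is mutually independent of the events for the edges disjoint from it,
   of which all but at most D = r d + 1 are.  The symmetric local lemma,
   e p (D + 1) <= 1, is exactly the degree hypothesis, since (1 + 1/D)^D <= e.
   The local lemma is proved in counting form over the finite set of all
   colourings, by the usual induction on the conditioning set. *)

Lemma INR_expn (m n : nat) : INR (m ^ n) = (INR m ^ n)%R.
Proof. by elim: n => [|n IHn] //=; rewrite expnS mult_INR IHn. Qed.

Lemma exp_pow (x : R) (n : nat) : (exp x ^ n = exp (INR n * x))%R.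
Proof.
elim: n => [|n IHn]; first by rewrite /= Rmult_0_l exp_0.
by rewrite [LHS]/= IHn -exp_plus S_INR; f_equal; ring.
Qed.

Lemma pow_succ_le_exp (D : nat) : (0 < D)%N -> (INR D.+1 ^ D <= exp 1 * INR D ^ D)%R.
Proof.
move=> D_gt0; have D_pos : (0 < INR D)%R by apply/lt_0_INR/ltP.
have invD_pos := Rinv_0_lt_compat _ D_pos.
have base_le : (1 + / INR D <= exp (/ INR D))%R.
  by apply/Rlt_le/exp_ineq1; lra.
have pow_le_e : ((1 + / INR D) ^ D <= exp 1)%R.
  rewrite -[X in exp X](Rinv_r (INR D)); last lra.
  by rewrite -exp_pow; apply: pow_incr; lra.
have -> : INR D.+1 = (INR D * (1 + / INR D))%R.
  by rewrite S_INR Rmult_plus_distr_l Rinv_r; lra.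
rewrite Rpow_mult_distr Rmult_comm; apply: Rmult_le_compat_r => //.
by apply: pow_le; lra.
Qed.

Lemma expn_succ_le (D K : nat) :
  (0 < D)%N -> (exp 1 * INR D.+1 <= INR K)%R -> D.+1 ^ D.+1 <= K * D ^ D.
Proof.
move=> D_gt0 eD_le_K; apply/leP/INR_le.
rewrite mult_INR !INR_expn [(INR D.+1 ^ D.+1)%R]/=.
have powD_ge0 : (0 <= INR D ^ D)%R by apply/pow_le/pos_INR.
apply: Rle_trans (Rmult_le_compat_l _ _ _ (pos_INR D.+1) (pow_succ_le_exp D_gt0)) _.
by rewrite -Rmult_assoc [(INR D.+1 * _)%R]Rmult_comm; apply: Rmult_le_compat_r.
Qed.

Lemma degree_bound_exp (r d k : nat) : (0 < r)%N ->
  (INR d <= (INR k ^ k * exp (-1) - 2) / INR r)%R ->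
  (exp 1 * INR (r * d).+2 <= INR (k ^ k))%R.
Proof.
move=> r_gt0; have r_pos : (0 < INR r)%R by apply/lt_0_INR/ltP.
rewrite INR_expn !S_INR mult_INR => d_le.
have rd_le : (INR r * INR d + 2 <= INR k ^ k * exp (-1))%R.
  have := Rmult_le_compat_l _ _ _ (Rlt_le _ _ r_pos) d_le.
  have -> : (INR r * ((INR k ^ k * exp (-1) - 2) / INR r) = INR k ^ k * exp (-1) - 2)%R.
    by field; lra.
  lra.
have e_inv : (exp 1 * exp (-1) = 1)%R by rewrite -exp_plus Rplus_opp_r exp_0.
have := Rmult_le_compat_l _ _ _ (Rlt_le _ _ (exp_pos 1)) rd_le.
by rewrite (Rmult_comm (INR k ^ k)) -Rmult_assoc e_inv; lra.
Qed.

Lemma lll_step_arith (a a' g g' m D K : nat) :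
  0 < D -> m <= D -> D.+1 ^ D.+1 <= K * D ^ D ->
  a <= a' -> a' * K <= g' -> g' * D ^ m <= g * D.+1 ^ m -> a * D.+1 <= g.
Proof.
move=> D_gt0 m_le_D KD a_le a'K g'_le.
have pos : 0 < D.+1 ^ m * D ^ (D - m) by rewrite muln_gt0 !expn_gt0 D_gt0.
have DD : D ^ D = D ^ m * D ^ (D - m) by rewrite -expnD subnKC.
have SS : D.+1 ^ D.+1 = D.+1 * (D.+1 ^ m * D.+1 ^ (D - m)) by rewrite -expnD subnKC // expnS.
rewrite -(leq_pmul2r pos) -[a * D.+1 * _]mulnA.
apply: (@leq_trans (a * D.+1 ^ D.+1)).
  rewrite SS; do 3! apply: leq_mul => //.
  by case: (D - m) => // e; rewrite leq_exp2r.
apply: (@leq_trans (a' * K * D ^ D)); first by rewrite -mulnA leq_mul.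
apply: (@leq_trans (g' * D ^ D)); first exact: leq_mul.
by rewrite DD !mulnA leq_mul.
Qed.

Section CountingLocalLemma.

Variables (O I : finType) (A : I -> {set O}).

Definition avoid (S : {set I}) : {set O} := [set w | [forall i in S, w \notin A i]].

Lemma avoid0 : avoid set0 = setT.
Proof. by apply/setP=> w; rewrite !inE; apply/forall_inP=> i; rewrite inE. Qed.

Lemma avoidU1 (x : I) (S : {set I}) : avoid (x |: S) = avoid S :\: A x.
Proof.
apply/setP=> w; rewrite !inE.
apply/forall_inP/andP => [avoidxS | [wAx /forall_inP avoidS] i].
  split; first by apply: avoidxS; rewrite setU11.
  by apply/forall_inP=> i iS; apply: avoidxS; rewrite setU1r.
by case/setU1P=> [-> | /avoidS].
Qed.

Lemma avoidS (S S' : {set I}) : S \subset S' -> avoid S' \subset avoid S.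
Proof.
move=> sSS'; apply/subsetP=> w; rewrite !inE => /forall_inP avoidS'.
by apply/forall_inP=> i /(subsetP sSS'); apply: avoidS'.
Qed.

Variables (E : {set I}) (D : nat).

(* Counting form of P(A i | no A j, j in S) <= 1/(D+1), for conditioning sets
   of size below n. *)
Definition cond_bound (n : nat) : Prop :=
  forall (S : {set I}) (i : I), #|S| < n -> S \subset E -> i \in E -> i \notin S ->
    #|A i :&: avoid S| * D.+1 <= #|avoid S|.

Lemma card_avoidU1 (n : nat) (S : {set I}) (x : I) :
  cond_bound n -> #|S| < n -> S \subset E -> x \in E -> x \notin S ->
  #|avoid S| * D <= #|avoid (x |: S)| * D.+1.
Proof.
move=> bound Sn SE xE xS; have := bound S x Sn SE xE xS.
rewrite avoidU1 -(cardsID (A x) (avoid S)) setIC.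
by move: #|_ :&: _| #|_ :\: _| => b c; nia.
Qed.

Lemma card_avoid_telescope (n : nat) (B T : {set I}) :
  cond_bound n -> B :|: T \subset E -> [disjoint B & T] -> #|B| + #|T| <= n ->
  #|avoid B| * D ^ #|T| <= #|avoid (B :|: T)| * D.+1 ^ #|T|.
Proof.
move=> bound; move Tt: #|T| => t; elim: t T Tt => [|t IHt] T Tt BTE dBT BTn.
  by move/eqP: Tt; rewrite cards_eq0 => /eqP->; rewrite setU0.
have [x xT] : exists x, x \in T by apply/card_gt0P; rewrite Tt.
set T' := T :\ x.
have T't : #|T'| = t by move: Tt; rewrite (cardsD1 x T) xT => -[].
have BTx : B :|: T = x |: (B :|: T') by rewrite setUCA setD1K.
have BT'E : B :|: T' \subset E := subset_trans (setUS B (subsetDl T [set x])) BTE.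
have BTn' : #|B| + t < n by rewrite -addnS.
have IH := IHt T' T't BT'E (disjointWr (subsetDl T [set x]) dBT) (ltnW BTn').
have card_BT' : #|B :|: T'| < n.
  by apply: leq_ltn_trans (leq_card_setU _ _) _; rewrite T't.
have xE : x \in E by apply: (subsetP BTE); rewrite inE xT orbT.
have xBT' : x \notin B :|: T' by rewrite !inE negb_or (disjointFl dBT xT) eqxx.
have step := card_avoidU1 bound card_BT' BT'E xE xBT'.
rewrite BTx !expnS; move: IH step; set q := D.+1 ^ t.
move: #|avoid B| #|avoid _| #|avoid _| => a b c IH step.
have := leq_mul IH (leqnn D); have := leq_mul step (leqnn q); nia.
Qed.

Variables (nbr : I -> I -> bool) (K : nat).
(* A i has probability at most 1/K conditionally on avoiding any family of
   events A j with j not a neighbour of i. *)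
Hypothesis avoid_indep : forall (i : I) (S : {set I}), i \in E -> S \subset E ->
  {in S, forall j, ~~ nbr i j} -> #|A i :&: avoid S| * K <= #|avoid S|.
Hypothesis card_nbr : forall i, i \in E -> #|[set j in E | nbr i j]| <= D.
Hypothesis D_gt0 : 0 < D.
Hypothesis KD : D.+1 ^ D.+1 <= K * D ^ D.

Lemma cond_bound_all (n : nat) : cond_bound n.
Proof.
elim: n => [|n IHn] S i //; rewrite ltnS => Sn SE iE iS.
set S1 := [set j in S | nbr i j]; set S2 := [set j in S | ~~ nbr i j].
have S21 : S = S2 :|: S1.
  by apply/setP=> j; rewrite !inE; case: (j \in S); case: (nbr i j).
have dS21 : [disjoint S2 & S1].
  by rewrite -setI_eq0; apply/eqP/setP=> j; rewrite !inE; case: (nbr i j); rewrite ?andbF.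
have cardS : #|S2| + #|S1| = #|S|.
  by rewrite S21 cardsU; move: dS21; rewrite -setI_eq0 => /eqP->; rewrite cards0 subn0.
have S2E : S2 \subset E by apply: subset_trans SE; apply/subsetP=> j; rewrite inE => /andP[].
apply: (@lll_step_arith _ #|A i :&: avoid S2| _ #|avoid S2| #|S1| D K) => //.
- apply: leq_trans (card_nbr iE); apply/subset_leq_card/subsetP=> j.
  by rewrite !inE => /andP[jS ->]; rewrite (subsetP SE).
- by apply/subset_leq_card/setIS/avoidS; rewrite S21 subsetUl.
- by apply: avoid_indep => // j; rewrite inE => /andP[].
- by rewrite [in avoid S]S21; apply: (card_avoid_telescope IHn); rewrite -?S21 ?cardS.
Qed.

Lemma card_avoid_gt0 : 0 < #|O| -> 0 < #|avoid E|.
Proof.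
move=> O_gt0; have := card_avoid_telescope (B := set0) (T := E) (cond_bound_all (n := #|E|)).
rewrite set0U avoid0 cardsT cards0 add0n -setI_eq0 set0I eqxx.
move=> /(_ (subxx _) isT (leqnn _)) tele.
have : 0 < #|avoid E| * D.+1 ^ #|E|.
  by apply: leq_trans tele; rewrite muln_gt0 O_gt0 expn_gt0 D_gt0.
by rewrite muln_gt0 => /andP[].
Qed.

End CountingLocalLemma.

Section Monochromatic.

Variables (V : finType) (k : nat).

Definition monochromatic (f : {ffun V -> 'I_k}) (e : {set V}) : bool :=
  [forall x in e, forall y in e, f x == f y].

Definition mono_colorings (e : {set V}) : {set {ffun V -> 'I_k}} :=
  [set f | monochromatic f e].

Lemma eq_monochromatic (f g : {ffun V -> 'I_k}) (e : {set V}) :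
  {in e, f =1 g} -> monochromatic f e = monochromatic g e.
Proof.
move=> fg; apply: eq_forallb_in => x xe; apply: eq_forallb_in => y ye.
by rewrite (fg x xe) (fg y ye).
Qed.

Lemma card_mono_avoid (e : {set V}) (v0 : V) (S : {set {set V}}) :
  0 < k -> v0 \in e -> {in S, forall j : {set V}, [disjoint e & j]} ->
  #|mono_colorings e :&: avoid mono_colorings S| * k ^ (#|e| - 1)
    <= #|avoid mono_colorings S|.
Proof.
(* Recolouring e minus v0 arbitrarily injects (mono_colorings e :&: avoid S) x W
   into avoid S: the edges of S do not see the recoloured vertices, and a
   monochromatic colouring is recovered from its colour at v0. *)
move=> k_gt0 v0e dS.
set c0 : 'I_k := Ordinal k_gt0; set e' := e :\ v0.
set W := [set w : {ffun V -> 'I_k} | w \in pffun_on c0 e' predT].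
have cardW : #|W| = k ^ (#|e| - 1).
  by rewrite cardsE card_pffun_on card_ord (cardsD1 v0 e) v0e add1n subn1.
pose recolor (p : {ffun V -> 'I_k} * {ffun V -> 'I_k}) : {ffun V -> 'I_k} :=
  [ffun x => if x \in e' then p.2 x else p.1 x].
rewrite -cardW -cardsX -(card_in_imset (f := recolor)).
  apply/subset_leq_card/subsetP=> _ /imsetP[[g w] /setXP[gM _] ->].
  move: gM; rewrite !inE => /andP[_ /forall_inP g_avoid].
  apply/forall_inP=> j jS; rewrite inE -(eq_monochromatic (f := g)); last first.
    by move=> x xj; rewrite ffunE !inE (disjointFl (dS j jS) xj) andbF.
  by have := g_avoid j jS; rewrite inE.
move=> [g1 w1] [g2 w2] /setXP[g1M w1W] /setXP[g2M w2W] /= eq_recolor.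
have {}eq_recolor x : recolor (g1, w1) x = recolor (g2, w2) x by rewrite eq_recolor.
have off_e' (w : {ffun V -> 'I_k}) x : w \in W -> x \notin e' -> w x = c0.
  rewrite inE => /pffun_onP[supp _] xe'; apply/eqP; apply: contraNT xe' => wx.
  by apply: (subsetP supp); rewrite inE.
have w12 x : w1 x = w2 x.
  have := eq_recolor x; rewrite !ffunE /=; case: ifP => // /negbT xe' _.
  by rewrite !off_e'.
have g12 x : g1 x = g2 x.
  have := eq_recolor x; rewrite !ffunE /=; case: ifP => // xe' _.
  have xe : x \in e by move: xe'; rewrite !inE => /andP[].
  have v0e' : v0 \notin e' by rewrite !inE eqxx.
  have := eq_recolor v0; rewrite !ffunE /= (negbTE v0e').
  move: g1M g2M; rewrite !inE => /andP[/forall_inP m1 _] /andP[/forall_inP m2 _].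
  move/forall_inP: (m1 x xe) => /(_ v0 v0e)/eqP->.
  by move/forall_inP: (m2 x xe) => /(_ v0 v0e)/eqP->.
by congr pair; apply/ffunP.
Qed.

End Monochromatic.

Lemma card_meeting_edges (V : finType) (E : {set {set V}}) (e : {set V}) (d : nat) :
  (forall v, degree E v <= d) -> #|[set j in E | ~~ [disjoint e & j]]| <= #|e| * d.
Proof.
move=> deg_le.
apply: (@leq_trans #|\bigcup_(v in e) [set j in E | v \in j]|).
  apply/subset_leq_card/subsetP=> j; rewrite !inE => /andP[jE /existsP[v /andP[ve vj]]].
  by apply/bigcupP; exists v => //; rewrite inE jE.
apply: (@leq_trans (\sum_(v in e) #|[set j in E | v \in j]|)).
  elim/big_ind2: _ => [|U1 n1 U2 n2 le1 le2|//]; first by rewrite cards0.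
  by apply: leq_trans (leq_card_setU _ _) _; apply: leq_add.
by rewrite -sum_nat_const; apply: leq_sum => v _; apply: deg_le.
Qed.

Lemma ncolors_nonmono (V : finType) (k : nat) (f : {ffun V -> 'I_k}) (e : {set V}) :
  ~~ monochromatic f e -> k < #|e| -> 1 < ncolors (fun x => nat_of_ord (f x)) e < #|e|.
Proof.
move=> nonmono k_lt; apply/andP; split.
  case/forall_inPn: nonmono => x xe /forall_inPn[y ye fxy].
  have : uniq [:: nat_of_ord (f x); nat_of_ord (f y)] by rewrite /= inE andbT.
  move/uniq_leq_size; apply=> z; rewrite !inE mem_undup.
  by case/orP=> /eqP->; apply/mapP; [exists x | exists y]; rewrite ?mem_enum.
apply: leq_ltn_trans k_lt.
have := uniq_leq_size (undup_uniq [seq nat_of_ord (f x) | x <- enum e]) (s2 := iota 0 k).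
rewrite size_iota; apply=> z.
by rewrite mem_undup => /mapP[x _ ->]; rewrite mem_iota add0n ltn_ord.
Qed.

Theorem mainTheorem5 (V : finType) (E : {set {set V}}) (r : nat) :
  3 <= r ->
  bihypergraph E ->
  uniform E r ->
  (forall v : V,
     (INR (degree E v) <= ((INR (r - 1)) ^ (r - 1) * exp (-1) - 2) / INR r)%R) ->
  colorable E.
Proof.
move=> r_ge3 _ unifE deg_le; set k := r - 1.
have r_gt0 : 0 < r by apply: leq_trans r_ge3.
have k_gt0 : 0 < k by rewrite subn_gt0; apply: leq_trans r_ge3.
have edge_gt0 e : e \in E -> exists v, v \in e by move=> eE; apply/card_gt0P; rewrite unifE.
have [E0 | [e0 /edge_gt0[v0 _]]] := set_0Vmem E.
  by exists (fun _ => 0) => e; rewrite E0 inE.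
have V_gt0 : 0 < #|V| by apply/card_gt0P; exists v0.
have [vm dE] := eq_bigmax (degree E) V_gt0; set d := \max_v degree E v in dE.
have KD : (r * d).+2 ^ (r * d).+2 <= k ^ k * (r * d).+1 ^ (r * d).+1.
  apply: expn_succ_le => //; apply: degree_bound_exp => //.
  by rewrite dE; apply: deg_le.
have [w] : exists w, w \in avoid (@mono_colorings V k) E.
  apply/card_gt0P; apply: (card_avoid_gt0 (A := @mono_colorings V k)
    (nbr := fun e j => ~~ [disjoint e & j]) _ _ (ltn0Sn _) KD).
  - move=> e S eE _ dS; have [v ve] := edge_gt0 e eE.
    have := card_mono_avoid k_gt0 ve (S := S); rewrite (unifE e eE); apply.
    by move=> j /dS; rewrite negbK.
  - move=> e eE; apply: leq_trans (card_meeting_edges e (@leq_bigmax _ (degree E))) _.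
    by rewrite unifE.
  - by apply/card_gt0P; exists [ffun _ => Ordinal k_gt0].
rewrite inE => /forall_inP w_avoid; exists (fun x => nat_of_ord (w x)) => e eE.
have := w_avoid e eE; rewrite inE => nonmono; apply: ncolors_nonmono nonmono _.
by rewrite unifE // ltn_subrL (leq_trans _ r_ge3).
Qed.
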